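(* There is $\varepsilon_0>0$ such that for every $\varepsilon$ with $0<\varepsilon<\varepsilon_0$, every even $m\geq 2$ and every odd $l\geq 1$, Challenger has a winning strategy in the game $\Gamma_{\mathrm{OP}}(\mathbb M_l,\mathbb M_m,6,\varepsilon)$.
   Context: $\mathbb M_m$ denotes the algebra of complex $m\times m$ matrices with matrix multiplication, addition, scalar multiplication and adjoint $a^*$ (conjugate transpose); $1_m$ is the identity matrix. For a vector $\xi=(x_1,\dots,x_m)\in\mathbb C^m$, $\|\xi\|=\sqrt{\sum_i|x_i|^2}$, and the operator norm of $a\in\mathbb M_m$ is $\|a\|_{\mathrm{OP}}=\sup\{\|a\xi\|:\|\xi\|=1\}$. For $l,m,n\geq 1$ and $\varepsilon>0$, the game $\Gamma_{\mathrm{OP}}(\mathbb M_l,\mathbb M_m,n,\varepsilon)$ between Challenger and Duplicator lasts $n$ innings: in each inning Challenger chooses a matrix $x$ with $\|x\|_{\mathrm{OP}}\leq 1$ in one of $\mathbb M_l$, $\mathbb M_m$, and Duplicator responds with a matrix $x$ with $\|x\|_{\mathrm{OP}}\leq 1$ in the other algebra; thus in inning $j$ matrices $a_j\in\mathbb M_l$ and $b_j\in\mathbb M_m$ are determined (repetitions are allowed). After $n$ innings Duplicator wins iff for all $i,j,k\leq n$ and all complex numbers $y,z$ with $\max(|y|,|z|)\leq 1$, each of the quantities $\big|\|a_i\|_{\mathrm{OP}}-\|b_i\|_{\mathrm{OP}}\big|$, $\big|\|a_ia_j-a_k\|_{\mathrm{OP}}-\|b_ib_j-b_k\|_{\mathrm{OP}}\big|$,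 $\big|\|ya_i+za_j-a_k\|_{\mathrm{OP}}-\|yb_i+zb_j-b_k\|_{\mathrm{OP}}\big|$ and $\big|\|a_i^*-a_j\|_{\mathrm{OP}}-\|b_i^*-b_j\|_{\mathrm{OP}}\big|$ is at most $\varepsilon$; otherwise Challenger wins. A winning strategy for a player is a rule specifying that player's moves as a function of previous moves such that the player wins regardless of the opponent's play. *)

From HB Require Import structures.
From mathcomp Require Import all_boot all_order all_algebra.
From mathcomp Require Import classical_sets reals Rstruct.
From mathcomp.real_closed Require Import complex.
Set Implicit Arguments. Unset Strict Implicit. Unset Printing Implicit Defensive.
Import Order.TTheory GRing.Theory Num.Theory.
Local Open Scope ring_scope.

Notation RR := Rdefinitions.R.
Notation CC := (RR[i]).

Definition vnorm (m : nat) (xi : 'cV[CC]_m) : RR :=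
  Num.sqrt (\sum_(i < m) (complex.Re (xi i 0) ^+ 2 + complex.Im (xi i 0) ^+ 2)).

Definition opnorm (m : nat) (a : 'M[CC]_m) : RR :=
  sup [set r : RR | exists xi : 'cV[CC]_m, vnorm xi = 1 /\ r = vnorm (a *m xi)].

Definition adj (m : nat) (a : 'M[CC]_m) : 'M[CC]_m :=
  \matrix_(i, j) conjc (a j i).

Definition cmove (l m : nat) : Type := ('M[CC]_l + 'M[CC]_m)%type.

Definition history (l m : nat) : Type := seq ('M[CC]_l * 'M[CC]_m).

Definition cstrat (l m : nat) : Type := history l m -> cmove l m.

Record dstrat (l m : nat) : Type := DStrat {
  dreplyL : history l m -> 'M[CC]_l -> 'M[CC]_m;
  dreplyR : history l m -> 'M[CC]_m -> 'M[CC]_l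
}.

Definition cstrat_legal (l m : nat) (s : cstrat l m) : Prop :=
  forall h, match s h with
            | inl a => opnorm a <= 1
            | inr b => opnorm b <= 1
            end.

Definition dstrat_legal (l m : nat) (t : dstrat l m) : Prop :=
  (forall h a, opnorm a <= 1 -> opnorm (dreplyL t h a) <= 1) /\
  (forall h b, opnorm b <= 1 -> opnorm (dreplyR t h b) <= 1).

Definition inning (l m : nat) (s : cstrat l m) (t : dstrat l m)
    (h : history l m) : 'M[CC]_l * 'M[CC]_m :=
  match s h with
  | inl a => (a, dreplyL t h a)
  | inr b => (dreplyR t h b, b)
  end.

Fixpoint play (l m : nat) (s : cstrat l m) (t : dstrat l m) (n : nat)
    : history l m :=
  match n with
  | 0 => [::]
  | n'.+1 => let h := play s t n' in rcons h (inning s t h)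
  end.

Definition dup_wins (l m : nat) (n : nat) (eps : RR) (p : history l m) : Prop :=
  let a := fun j => (nth (0, 0) p j).1 in
  let b := fun j => (nth (0, 0) p j).2 in
  forall i j k : nat, (i < n)%N -> (j < n)%N -> (k < n)%N ->
  forall y z : CC, `|y| <= 1 -> `|z| <= 1 ->
    [/\ `| opnorm (a i) - opnorm (b i) | <= eps,
        `| opnorm (a i *m a j - a k) - opnorm (b i *m b j - b k) | <= eps,
        `| opnorm (y *: a i + z *: a j - a k)
           - opnorm (y *: b i + z *: b j - b k) | <= eps
      & `| opnorm (adj (a i) - a j) - opnorm (adj (b i) - b j) | <= eps].

Definition challenger_wins (l m n : nat) (eps : RR) : Prop :=
  exists s : cstrat l m, cstrat_legal s /\
    forall t : dstrat l m, dstrat_legal t -> ~ dup_wins n eps (play s t n).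

(* Challenger plays 1 in M_l, then 1, Z, X, ZX, XZ in M_m, where m = 2k and
   Z = σ_z ⊗ 1_k, X = σ_x ⊗ 1_k are self-adjoint unitaries with XZ = -ZX.
   If Duplicator's answers F, A, B, C, D in M_l win, then up to O(ε) in
   operator norm F = 1, A = A^t*, A^2 = B^2 = F, AB = C, BA = D and C = -D, so
   the hermitian part H of A and the matrix B are approximate symmetries that
   approximately anticommute. For odd l this is impossible: the eigenvalues of
   H lie near ±1, one sign c has an eigenspace of dimension > l/2, and a
   dimension count yields ξ ≠ 0 with ξ and Bξ both in it. Then H(Bξ) ≈ c Bξ,
   while HB ≈ -BH gives H(Bξ) ≈ -c Bξ, contradicting |Bξ| ≈ |ξ|. *)

From HB Require Import structures.
From mathcomp Require Import all_boot all_order all_algebra.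
From mathcomp Require Import classical_sets reals Rstruct.
From mathcomp.real_closed Require Import complex.
From mathcomp Require Import ring lra sesquilinear spectral.
Import Order.TTheory GRing.Theory Num.Theory.
Local Open Scope ring_scope.
Local Open Scope sesquilinear_scope.
Set Implicit Arguments. Unset Strict Implicit. Unset Printing Implicit Defensive.

Definition sqmod (z : CC) : RR := complex.Re z ^+ 2 + complex.Im z ^+ 2.

Definition redot (z w : CC) : RR :=
  complex.Re z * complex.Re w + complex.Im z * complex.Im w.

Lemma sqmod_ge0 z : 0 <= sqmod z.
Proof. by rewrite addr_ge0 ?sqr_ge0. Qed.

Lemma sqmodM z w : sqmod (z * w) = sqmod z * sqmod w.
Proof. by case: z => a b; case: w => c d; rewrite /sqmod /=; ring. Qed.

Lemma sqmodD z w : sqmod (z + w) = sqmod z + sqmod w + 2 * redot z w.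
Proof. by case: z => a b; case: w => c d; rewrite /sqmod /redot /=; ring. Qed.

Lemma sqmod_real (r : RR) : sqmod r%:C%C = r ^+ 2.
Proof. by rewrite /sqmod /=; ring. Qed.

Lemma sqmod_eq0 z : (sqmod z == 0) = (z == 0).
Proof.
case: z => a b; rewrite /sqmod paddr_eq0 ?sqr_ge0 // !sqrf_eq0.
by rewrite eq_complex.
Qed.

Lemma Re_sqr_le_sqmod z : complex.Re z ^+ 2 <= sqmod z.
Proof. by rewrite lerDl sqr_ge0. Qed.

(* AM-GM with weight [t]: the pointwise step of Cauchy-Schwarz in [vnormD] *)
Lemma redot_le (t : RR) z w :
  0 < t -> 2 * redot z w <= t * sqmod z + t^-1 * sqmod w.
Proof.
move=> t_gt0; rewrite -subr_ge0 (_ : _ - _ = t^-1 *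
    ((t * complex.Re z - complex.Re w) ^+ 2 + (t * complex.Im z - complex.Im w) ^+ 2)).
  by rewrite mulr_ge0 ?addr_ge0 ?sqr_ge0 // invr_ge0 ltW.
by rewrite /sqmod /redot; field; rewrite gt_eqF.
Qed.

Section VectorNorm.
Variable n : nat.
Implicit Types (xi zeta : 'cV[CC]_n) (c : CC).

Lemma vnormE xi : vnorm xi = Num.sqrt (\sum_i sqmod (xi i 0)).
Proof. by []. Qed.

Lemma sum_sqmod_ge0 xi : 0 <= \sum_i sqmod (xi i 0).
Proof. by apply: sumr_ge0 => i _; apply: sqmod_ge0. Qed.

Lemma vnorm_ge0 xi : 0 <= vnorm xi.
Proof. exact: sqrtr_ge0. Qed.

Lemma sqr_vnorm xi : vnorm xi ^+ 2 = \sum_i sqmod (xi i 0).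
Proof. by rewrite sqr_sqrtr // sum_sqmod_ge0. Qed.

Lemma vnorm_eq0 xi : (vnorm xi == 0) = (xi == 0).
Proof.
rewrite vnormE sqrtr_eq0 [_ <= 0]le_eqVlt ltNge sum_sqmod_ge0 orbF psumr_eq0; last first.
  by move=> i _; apply: sqmod_ge0.
apply/allP/eqP => [xi0|-> i _]; last by rewrite mxE sqmod_eq0 eqxx.
apply/matrixP => i j; rewrite (ord1 j) mxE; apply/eqP.
by rewrite -sqmod_eq0; apply: xi0; apply: mem_index_enum.
Qed.

Lemma vnorm_gt0 xi : xi != 0 -> 0 < vnorm xi.
Proof. by rewrite lt0r vnorm_eq0 vnorm_ge0 andbT. Qed.

Lemma vnorm0 : vnorm (0 : 'cV[CC]_n) = 0.
Proof. by apply/eqP; rewrite vnorm_eq0. Qed.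

Lemma vnormZ c xi : vnorm (c *: xi) = Num.sqrt (sqmod c) * vnorm xi.
Proof.
rewrite !vnormE -sqrtrM ?sqmod_ge0 // mulr_sumr.
by congr Num.sqrt; apply: eq_bigr => i _; rewrite mxE sqmodM.
Qed.

Lemma vnormZr (r : RR) xi : vnorm (r%:C%C *: xi) = `|r| * vnorm xi.
Proof. by rewrite vnormZ sqmod_real sqrtr_sqr. Qed.

Lemma vnormN xi : vnorm (- xi) = vnorm xi.
Proof.
rewrite -scaleN1r (_ : -1 = (-1 : RR)%:C%C) ?vnormZr ?normrN1 ?mul1r //.
by apply/eqP; rewrite eq_complex /= oppr0 !eqxx.
Qed.

Lemma vnorm_delta i : vnorm (delta_mx i 0 : 'cV[CC]_n) = 1.
Proof.
rewrite vnormE (bigD1 i) //= big1 ?addr0 => [|j /negPf ji]; last first.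
  by rewrite mxE ji; apply/eqP; rewrite sqmod_eq0.
by rewrite mxE !eqxx sqmod_real expr1n sqrtr1.
Qed.

Lemma vnorm_double xi : vnorm (xi + xi) = 2 * vnorm xi.
Proof.
have -> : xi + xi = (2 : RR)%:C%C *: xi.
  apply/matrixP => i j; rewrite !mxE.
  by case: (xi i j) => a b; simpc; congr (_ +i* _)%C; ring.
by rewrite vnormZr ger0_norm.
Qed.

Lemma vnormD xi zeta : vnorm (xi + zeta) <= vnorm xi + vnorm zeta.
Proof.
have [->|xi0] := eqVneq xi 0; first by rewrite add0r vnorm0 add0r.
have [->|zeta0] := eqVneq zeta 0; first by rewrite addr0 vnorm0 addr0.
set a := vnorm xi; set b := vnorm zeta.
have a_gt0 : 0 < a by apply: vnorm_gt0.
have b_gt0 : 0 < b by apply: vnorm_gt0.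
rewrite -ler_sqr ?nnegrE ?addr_ge0 ?vnorm_ge0 // sqr_vnorm.
have -> : \sum_i sqmod ((xi + zeta) i 0)
    = a ^+ 2 + b ^+ 2 + \sum_i 2 * redot (xi i 0) (zeta i 0).
  by rewrite !sqr_vnorm -!big_split; apply: eq_bigr => i _; rewrite mxE sqmodD.
have CS : \sum_i 2 * redot (xi i 0) (zeta i 0) <= 2 * (a * b).
  apply: le_trans (ler_sum _ (fun i _ => redot_le _ _ (divr_gt0 b_gt0 a_gt0))) _.
  rewrite big_split /= -!mulr_sumr -!sqr_vnorm -/a -/b invf_div.
  suff -> : b / a * a ^+ 2 + a / b * b ^+ 2 = 2 * (a * b) by [].
  by field; rewrite !gt_eqF.
by rewrite sqrrD; lra.
Qed.

Lemma vnormB xi zeta : vnorm (xi - zeta) <= vnorm xi + vnorm zeta.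
Proof. by rewrite -(vnormN zeta) vnormD. Qed.

Lemma vnorm_sum k (F : 'I_k -> 'cV[CC]_n) :
  vnorm (\sum_j F j) <= \sum_j vnorm (F j).
Proof.
elim/big_rec2: _ => [|j y1 y2 _ IH]; first by rewrite vnorm0.
by apply: le_trans (vnormD _ _) _; rewrite lerD2l.
Qed.

Lemma vnorm_unitary (U : 'M[CC]_n) xi :
  U^t* *m U = 1%:M -> vnorm (U *m xi) = vnorm xi.
Proof.
have sqmodE zeta : (\sum_i sqmod (zeta i 0))%:C%C = (zeta^t* *m zeta) 0 0.
  rewrite mxE rmorph_sum; apply: eq_bigr => i _; rewrite !mxE.
  by case: (zeta i 0) => a b; rewrite /sqmod /=; simpc; congr (_ +i* _)%C; ring.
move=> UU; rewrite !vnormE; congr Num.sqrt; apply: complexI.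
by rewrite !sqmodE trmx_mul map_mxM -mulmxA (mulmxA _ U) UU mul1mx.
Qed.

End VectorNorm.

(* [opnorm X <= e] without the supremum; the two agree in positive dimension
   ([opnorm_mxbound], [opnorm_le]). *)
Definition mxbound n (X : 'M[CC]_n) (e : RR) :=
  forall xi, vnorm (X *m xi) <= e * vnorm xi.

Section OperatorNorm.
Variable n : nat.
Implicit Types (X Y : 'M[CC]_n) (e : RR).

Let unit_image X :=
  [set r : RR | exists xi, vnorm xi = 1 /\ r = vnorm (X *m xi)]%classic.

Lemma has_ubound_unit_image X : has_ubound (unit_image X).
Proof.
exists (\sum_j vnorm (col j X)) => _ [xi [xi1 ->]].
have -> : X *m xi = \sum_j xi j 0 *: col j X.
  apply/matrixP => i k; rewrite (ord1 k) !mxE summxE.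
  by apply: eq_bigr => j _; rewrite !mxE mulrC.
apply: le_trans (vnorm_sum _) _; apply: ler_sum => j _.
rewrite vnormZ ler_piMl ?vnorm_ge0 // -sqrtr1 ler_sqrt // -(expr1n _ 2) -xi1.
by rewrite sqr_vnorm (bigD1 j) //= lerDl sumr_ge0 // => i _; apply: sqmod_ge0.
Qed.

Lemma mxbound_opnorm X : mxbound X (opnorm X).
Proof.
move=> xi; have [->|xi0] := eqVneq xi 0; first by rewrite mulmx0 vnorm0 mulr0.
have xi_gt0 := vnorm_gt0 xi0.
set c := (vnorm xi)^-1%:C%C.
have cxi1 : vnorm (c *: xi) = 1 by rewrite vnormZr gtr0_norm ?invr_gt0 ?mulVf ?gt_eqF.
have img : unit_image X (vnorm (X *m (c *: xi))) by exists (c *: xi).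
have := sup_upper_bound (conj (ex_intro _ _ img) (has_ubound_unit_image X)) img.
by rewrite -scalemxAr vnormZr gtr0_norm ?invr_gt0 // ler_pdivrMl // mulrC.
Qed.

Lemma mxbound_le X e e' : e <= e' -> mxbound X e -> mxbound X e'.
Proof.
by move=> ee' Xe xi; apply: le_trans (Xe xi) _; rewrite ler_wpM2r ?vnorm_ge0.
Qed.

Lemma opnorm_mxbound X e : opnorm X <= e -> mxbound X e.
Proof. by move=> Xe; apply: mxbound_le Xe (mxbound_opnorm X). Qed.

Lemma opnorm_le X e : (0 < n)%N -> mxbound X e -> opnorm X <= e.
Proof.
move=> n_gt0 Xe; apply: ge_sup => [|_ [xi [xi1 ->]]]; last by rewrite -[e]mulr1 -xi1 Xe.
pose i0 := Ordinal n_gt0.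
by exists (vnorm (X *m delta_mx i0 0)), (delta_mx i0 0); rewrite vnorm_delta.
Qed.

Lemma mxboundD X Y a b : mxbound X a -> mxbound Y b -> mxbound (X + Y) (a + b).
Proof.
move=> Xa Yb xi; rewrite mulmxDl mulrDl.
by apply: le_trans (vnormD _ _) _; apply: lerD.
Qed.

Lemma mxboundN X a : mxbound X a -> mxbound (- X) a.
Proof. by move=> Xa xi; rewrite mulNmx vnormN. Qed.

Lemma mxboundM X Y a b : 0 <= a -> mxbound X a -> mxbound Y b ->
  mxbound (X *m Y) (a * b).
Proof.
move=> a_ge0 Xa Yb xi; rewrite -mulmxA -mulrA.
by apply: le_trans (Xa _) _; rewrite ler_wpM2l.
Qed.

Lemma mxboundZr X (r a : RR) : mxbound X a -> mxbound (r%:C%C *: X) (`|r| * a).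
Proof.
by move=> Xa xi; rewrite -scalemxAl vnormZr -mulrA ler_wpM2l ?normr_ge0.
Qed.

Lemma mxbound_trans X Y Z a b :
  mxbound (X - Y) a -> mxbound (Y - Z) b -> mxbound (X - Z) (a + b).
Proof.
by move=> XY YZ; rewrite -[X](subrK Y) -addrA; apply: mxboundD.
Qed.

Lemma mxbound_unitary X : X^t* *m X = 1%:M -> mxbound X 1.
Proof. by move=> XX xi; rewrite vnorm_unitary // mul1r. Qed.

End OperatorNorm.

Lemma mxbound_opnorm_sub0 n m (X : 'M[CC]_n) (e : RR) : (0 < m)%N ->
  `|opnorm X - opnorm (0 : 'M[CC]_m)| <= e -> mxbound X e.
Proof.
move=> m_gt0 Xe; apply: opnorm_mxbound.
have : opnorm (0 : 'M[CC]_m) <= 0.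
  by apply: opnorm_le => // xi; rewrite mul0mx vnorm0 mul0r.
by have := ler_norm (opnorm X - opnorm (0 : 'M[CC]_m)); lra.
Qed.

Definition hermpart n (A : 'M[CC]_n) : 'M[CC]_n := (2^-1 : RR)%:C%C *: (A + A^t*).

Lemma hermpart_adj n (A : 'M[CC]_n) : (hermpart A)^t* = hermpart A.
Proof.
apply/matrixP => i j; rewrite !mxE.
by case: (A i j) (A j i) => [a b] [c d] /=; congr (_ +i* _)%C; ring.
Qed.

Lemma hermpartBl n (A : 'M[CC]_n) :
  hermpart A - A = (2^-1 : RR)%:C%C *: (A^t* - A).
Proof.
apply/matrixP => i j; rewrite !mxE.
case: (A i j) => a b; case: (Num.conj _) => c d; simpc.
by congr (_ +i* _)%C; field.
Qed.

Section HermitianPart.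
Variables (n : nat) (A B C D F : 'M[CC]_n) (e : RR).
Hypotheses (e_ge0 : 0 <= e) (e_le1 : e <= 1).
Hypotheses (A1 : mxbound A 1) (B1 : mxbound B 1).
Hypotheses (A_adj : mxbound (A^t* - A) e) (F_1 : mxbound (F - 1%:M) e).
Hypotheses (AA_F : mxbound (A *m A - F) e) (BB_F : mxbound (B *m B - F) e).
Hypotheses (AB_C : mxbound (A *m B - C) e) (BA_D : mxbound (B *m A - D) e).
Hypothesis (C_D : mxbound (C + D) e).

Let H := hermpart A.

Let H_A : mxbound (H - A) (e / 2).
Proof.
rewrite /H hermpartBl (_ : e / 2 = `|2^-1 : RR| * e); first exact: mxboundZr.
by rewrite ger0_norm ?invr_ge0 // mulrC.
Qed.

Let H1 : mxbound H (1 + e / 2).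
Proof. by rewrite -[H](subrK A) addrC; apply: mxboundD. Qed.

Lemma hermpart_sqr_approx : mxbound (H *m H - 1%:M) (4 * e).
Proof.
have HH_AH : mxbound (H *m H - A *m H) (e / 2 * (1 + e / 2)).
  by rewrite -mulmxBl; apply: mxboundM H_A H1; rewrite divr_ge0.
have AH_AA : mxbound (A *m H - A *m A) (1 * (e / 2)).
  by rewrite -mulmxBr; apply: mxboundM A1 H_A.
apply: mxbound_le (mxbound_trans HH_AH (mxbound_trans AH_AA
          (mxbound_trans AA_F F_1))).
by move: e_ge0 e_le1; nra.
Qed.

Lemma sqr_approx : mxbound (B *m B - 1%:M) (4 * e).
Proof. by apply: mxbound_le (mxbound_trans BB_F F_1); move: e_ge0; lra. Qed.

Lemma hermpart_anticomm_approx : mxbound (H *m B + B *m H) (4 * e).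
Proof.
have HB_AB : mxbound (H *m B - A *m B) (e / 2 * 1).
  by rewrite -mulmxBl; apply: mxboundM H_A B1; rewrite divr_ge0.
have C_ND : mxbound (C - - D) e by rewrite opprK.
have ND_NBA : mxbound (- D - - (B *m A)) e by rewrite opprK addrC.
have NBA_NBH : mxbound (- (B *m A) - - (B *m H)) (1 * (e / 2)).
  by rewrite opprK addrC -mulmxBr; apply: mxboundM B1 H_A.
rewrite -[B *m H]opprK; apply: mxbound_le (mxbound_trans HB_AB
  (mxbound_trans AB_C (mxbound_trans C_ND (mxbound_trans ND_NBA NBA_NBH)))).
by move: e_ge0; lra.
Qed.

End HermitianPart.

Definition sgnb (b : bool) : RR := if b then 1 else -1.

Lemma normr_sgnb s : `|sgnb s| = 1.
Proof. by case: s; rewrite /= ?normrN1 ?normr1. Qed.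

(* [z^2 - 1 = (z - s) (z + s)], and [|z + s| >= 1] when [s] is the sign of [Re z] *)
Lemma sqmod_sub_sgnb z :
  sqmod (z - (sgnb (0 <= complex.Re z))%:C%C) <= sqmod (z ^+ 2 - 1).
Proof.
case: z => a b /=; set s := sgnb _.
have -> : (a +i* b)%C ^+ 2 - 1 = ((a +i* b)%C - s%:C%C) * ((a +i* b)%C + s%:C%C).
  by rewrite /s /sgnb; case: (_ <= _); simpc; congr (_ +i* _)%C; ring.
rewrite sqmodM ler_peMr ?sqmod_ge0 //; apply: le_trans (Re_sqr_le_sqmod _).
by rewrite /s /sgnb /=; case: (leP 0 a) => a0; nra.
Qed.

Lemma hermitian_diagonalization n (H : 'M[CC]_n) : H^t* = H ->
  exists (P : 'M[CC]_n) (d : 'rV[CC]_n),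
    [/\ P *m P^t* = 1%:M, P^t* *m P = 1%:M
      & H = P^t* *m diag_mx d *m P].
Proof.
move=> H_adj; have PU := spectral_unitarymx H.
exists (spectralmx H), (spectral_diag H); split.
- exact/unitarymxP.
- by move: PU; rewrite -trmxC_unitary => /unitarymxP; rewrite trmxCK.
- rewrite -invmx_unitary //; apply/orthomx_spectralP/normalmxP.
  by rewrite H_adj.
Qed.

Section UnitaryDiagonal.
Variables (n : nat) (P : 'M[CC]_n) (d : 'rV[CC]_n).
Hypotheses (PPt : P *m P^t* = 1%:M) (PtP : P^t* *m P = 1%:M).

Let H := P^t* *m diag_mx d *m P.
Let side i := 0 <= complex.Re (d 0 i).

Lemma diag_eigen_near_sgnb δ : mxbound (H *m H - 1%:M) δ ->
  forall i, sqmod (d 0 i - (sgnb (side i))%:C%C) <= δ ^+ 2.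
Proof.
move=> HH i; apply: le_trans (sqmod_sub_sgnb _) _.
pose x : 'cV[CC]_n := P^t* *m delta_mx i 0.
have x1 : vnorm x = 1 by rewrite vnorm_unitary ?trmxCK // vnorm_delta.
have Hx : H *m x = d 0 i *: x.
  rewrite /H /x -!mulmxA (mulmxA P) PPt mul1mx scalemxAr; congr (_ *m _).
  apply/matrixP => j k; rewrite (ord1 k) mul_diag_mx !mxE.
  by case: eqP => [->|]; rewrite ?mulr1 ?mulr0.
have := HH x; rewrite mulmxBl mul1mx -mulmxA !Hx -scalemxAr Hx scalerA -expr2.
rewrite -[X in _ - X]scale1r -scalerBl vnormZ x1 !mulr1 => le_δ.
have δ_ge0 : 0 <= δ := le_trans (sqrtr_ge0 _) le_δ.
by rewrite -(sqr_sqrtr (sqmod_ge0 (_ - 1))) lerXn2r ?nnegrE ?sqrtr_ge0.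
Qed.

Lemma diag_near_sgnb_on_side δ s x : 0 <= δ ->
  (forall i, sqmod (d 0 i - (sgnb (side i))%:C%C) <= δ ^+ 2) ->
  (forall i, side i != s -> (P *m x) i 0 = 0) ->
  vnorm (H *m x - (sgnb s)%:C%C *: x) <= δ * vnorm x.
Proof.
move=> δ_ge0 near supp; set eta := P *m x.
have -> : H *m x - (sgnb s)%:C%C *: x =
    P^t* *m \col_k ((d 0 k - (sgnb s)%:C%C) * eta k 0).
  rewrite /H -[x in _ *: x]mul1mx -PtP -!mulmxA scalemxAr -mulmxBr.
  congr (_ *m _); apply/matrixP => k j.
  by rewrite (ord1 j) mul_diag_mx !mxE mulrBl.
rewrite vnorm_unitary ?trmxCK // -[vnorm x](vnorm_unitary _ PtP).
rewrite -(ger0_norm δ_ge0) -sqrtr_sqr !vnormE -sqrtrM ?sqr_ge0 // ler_sqrt.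
  rewrite mulr_sumr; apply: ler_sum => k _; rewrite mxE sqmodM.
  have [sk|/supp ->] := eqVneq (side k) s; last by rewrite (sqmod_real 0) expr0n !mulr0.
  by rewrite ler_wpM2r ?sqmod_ge0 // -sk near.
by rewrite mulr_ge0 ?sqr_ge0 ?sum_sqmod_ge0.
Qed.

End UnitaryDiagonal.

Lemma odd_majority n (f : 'I_n -> bool) : odd n ->
  exists c, (#|[set i | f i != c]|.*2 < n)%N.
Proof.
move=> odd_n; set a := #|[set i | f i != true]|; set b := #|[set i | f i != false]|.
have ab : (a + b)%N = n.
  have compl : ~: [set i | f i != true] = [set i | f i != false].
    by apply/setP => i; rewrite !inE; case: (f i).
  by rewrite /b -compl cardsC card_ord.
case: (ltngtP a b) => [lt_ab|lt_ba|eq_ab].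
- by exists true; rewrite -addnn (leq_trans _ (eq_leq ab)) ?ltn_add2l.
- by exists false; rewrite -addnn (leq_trans _ (eq_leq ab)) ?ltn_add2r.
- by exfalso; move: odd_n; rewrite -ab eq_ab addnn odd_double.
Qed.

Lemma exists_vanishing_with_image (F : fieldType) n (J : {set 'I_n})
    (M : 'M[F]_n) : (#|J|.*2 < n)%N ->
  exists2 eta : 'cV[F]_n, eta != 0 &
    forall i, i \in J -> eta i 0 = 0 /\ (M *m eta) i 0 = 0.
Proof.
move=> small_J.
pose S : 'M[F]_(#|J|, n) := \matrix_(j, k) (k == enum_val j)%:R.
have S_entry (v : 'cV[F]_n) j : (S *m v) j 0 = v (enum_val j) 0.
  rewrite mxE (bigD1 (enum_val j)) //= big1 ?addr0 => [|k /negPf kj].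
    by rewrite mxE eqxx mul1r.
  by rewrite mxE kj mul0r.
pose N := col_mx S (S *m M).
have : kermx N^T != 0.
  rewrite -mxrank_eq0 mxrank_ker mxrank_tr -lt0n subn_gt0.
  by apply: leq_ltn_trans small_J; rewrite -addnn rank_leq_row.
case/rowV0Pn => v /sub_kermxP vN v0; exists v^T; first by rewrite trmx_eq0.
have : N *m v^T = 0 by rewrite -[N]trmxK -trmx_mul vN trmx0.
rewrite mul_col_mx -mulmxA => /eqP; rewrite col_mx_eq0 => /andP[/eqP Sv /eqP SMv].
move=> i iJ; rewrite -(enum_rankK_in iJ iJ) -!S_entry Sv SMv.
by rewrite !mxE.
Qed.

Lemma anticomm_approx_eigvec_bound n (H B : 'M[CC]_n) δ c (xi : 'cV[CC]_n) :
  0 <= δ -> mxbound B 1 -> mxbound (B *m B - 1%:M) δ ->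
  mxbound (H *m B + B *m H) δ -> xi != 0 ->
  vnorm (H *m xi - (sgnb c)%:C%C *: xi) <= δ * vnorm xi ->
  vnorm (H *m (B *m xi) - (sgnb c)%:C%C *: (B *m xi)) <= δ * vnorm (B *m xi) ->
  2 / 5 <= δ.
Proof.
set sc := (sgnb c)%:C%C; set y := B *m xi.
move=> δ_ge0 B1 BB HB /vnorm_gt0 xi_gt0 Hxi Hy.
have y_le : vnorm y <= vnorm xi by rewrite -[vnorm xi]mul1r B1.
have y_ge : vnorm xi <= vnorm y + δ * vnorm xi.
  have decomp : xi = B *m y - (B *m B - 1%:M) *m xi.
    by rewrite mulmxBl mul1mx opprB mulmxA addrC subrK.
  rewrite {1}decomp; apply: le_trans (vnormB _ _) _.
  by rewrite lerD ?BB // -[vnorm y]mul1r B1.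
(* [H y ~ - sc *: y] because [H B ~ - B H] and [H xi ~ sc *: xi] *)
have Hy_opp : vnorm (H *m y + sc *: y) <= (δ + δ) * vnorm xi.
  have -> : H *m y + sc *: y
      = (H *m B + B *m H) *m xi - B *m (H *m xi - sc *: xi).
    rewrite mulmxDl mulmxBr -!mulmxA opprB -scalemxAr [sc *: _ - _]addrC.
    by rewrite addrA addrK.
  rewrite mulrDl; apply: le_trans (vnormB _ _) _; rewrite lerD ?HB //.
  by apply: le_trans (B1 _) _; rewrite mul1r.
have two_y : 2 * vnorm y <=
    vnorm (H *m y + sc *: y) + vnorm (H *m y - sc *: y).
  have -> : 2 * vnorm y = vnorm (sc *: y + sc *: y).
    by rewrite vnorm_double vnormZr normr_sgnb mul1r.
  have -> : sc *: y + sc *: y = (H *m y + sc *: y) - (H *m y - sc *: y).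
    by rewrite opprB [RHS]addrC addrA subrK.
  exact: vnormB.
have δy : δ * vnorm y <= δ * vnorm xi by rewrite ler_wpM2l.
rewrite -(ler_pM2r xi_gt0); rewrite mulrDl in Hy_opp.
by clear -two_y Hy Hy_opp y_ge δy; lra.
Qed.

Theorem odd_anticomm_approx_bound n (H B : 'M[CC]_n) δ :
  odd n -> H^t* = H -> 0 <= δ -> mxbound B 1 ->
  mxbound (H *m H - 1%:M) δ -> mxbound (B *m B - 1%:M) δ ->
  mxbound (H *m B + B *m H) δ -> 2 / 5 <= δ.
Proof.
move=> odd_n H_adj δ_ge0 B1 HH BB HB.
have [P [d [PPt PtP Hd]]] := hermitian_diagonalization H_adj.
pose side i := 0 <= complex.Re (d 0 i).
have [c small] := odd_majority side odd_n.
have [eta eta0 vanish] := exists_vanishing_with_image (P *m B *m P^t*) small.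
have on_side x : (forall i, side i != c -> (P *m x) i 0 = 0) ->
    vnorm (H *m x - (sgnb c)%:C%C *: x) <= δ * vnorm x.
  rewrite Hd; apply: diag_near_sgnb_on_side => //.
  by move: HH; rewrite Hd; apply: diag_eigen_near_sgnb.
apply: (@anticomm_approx_eigvec_bound _ H B δ c (P^t* *m eta)) => //.
- by rewrite -vnorm_eq0 vnorm_unitary ?trmxCK // vnorm_eq0.
- apply: on_side => i ci; rewrite mulmxA PPt mul1mx.
  by case: (vanish i); rewrite ?inE.
- apply: on_side => i ci; rewrite !mulmxA.
  by case: (vanish i); rewrite ?inE.
Qed.

Section Plays.
Variables (l m : nat) (s : cstrat l m) (t : dstrat l m).

Lemma size_play n : size (play s t n) = n.
Proof. by elim: n => //= n IH; rewrite size_rcons IH. Qed.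

Lemma nth_play n j : (j < n)%N ->
  nth (0, 0) (play s t n) j = inning s t (play s t j).
Proof.
elim: n => // n IH; rewrite ltnS leq_eqVlt => /predU1P[->|lt_jn] /=.
  by rewrite nth_rcons size_play ltnn eqxx.
by rewrite nth_rcons size_play lt_jn IH.
Qed.

Lemma play_legal n j : cstrat_legal s -> dstrat_legal t -> (j < n)%N ->
  opnorm (nth (0, 0) (play s t n) j).1 <= 1 /\
  opnorm (nth (0, 0) (play s t n) j).2 <= 1.
Proof.
move=> sL [tL tR] lt_jn; rewrite nth_play // /inning.
by have := sL (play s t j); case: (s _) => x x1; split => //=; [apply: tL | apply: tR].
Qed.

End Plays.

Lemma nth_play_sized l m (f : nat -> cmove l m) (t : dstrat l m) n j :
  (j < n)%N ->
  match f j with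
  | inl a => (nth (0, 0) (play (fun h => f (size h)) t n) j).1 = a
  | inr b => (nth (0, 0) (play (fun h => f (size h)) t n) j).2 = b
  end.
Proof. by move=> lt_jn; rewrite nth_play // /inning size_play; case: (f j). Qed.

Section DuplicatorWins.
Variables (l m n : nat) (eps : RR) (p : history l m).
Hypotheses (m_gt0 : (0 < m)%N) (win : dup_wins n eps p).
Local Notation a j := (nth (0, 0) p j).1.
Local Notation b j := (nth (0, 0) p j).2.

Let abs0 : `|0 : CC| <= 1. Proof. by rewrite normr0 ler01. Qed.
Let absN1 : `|-1 : CC| <= 1. Proof. by rewrite normrN1. Qed.

Lemma dup_wins_mul i j k : (i < n)%N -> (j < n)%N -> (k < n)%N ->
  b i *m b j = b k -> mxbound (a i *m a j - a k) eps.
Proof.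
move=> hi hj hk bk; have [_ + _ _] := win hi hj hk abs0 abs0.
by rewrite bk subrr; apply: mxbound_opnorm_sub0.
Qed.

Lemma dup_wins_lin i k : (i < n)%N -> (k < n)%N ->
  - b i = b k -> mxbound (- a i - a k) eps.
Proof.
move=> hi hk bk; have [_ _ + _] := win hi hi hk absN1 abs0.
by rewrite !scale0r !addr0 !scaleN1r bk subrr; apply: mxbound_opnorm_sub0.
Qed.

Lemma dup_wins_adj i j : (i < n)%N -> (j < n)%N ->
  (b i)^t* = b j -> mxbound ((a i)^t* - a j) eps.
Proof.
move=> hi hj bj; have [_ _ _ +] := win hi hj hj abs0 abs0.
have adjE q (X : 'M[CC]_q) : adj X = X^t* by apply/matrixP => r c; rewrite !mxE.
by rewrite !adjE bj subrr; apply: mxbound_opnorm_sub0.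
Qed.

End DuplicatorWins.

Section Pauli.
Variable k : nat.

Definition pauliZ : 'M[CC]_(k + k) := block_mx 1%:M 0 0 (- 1%:M).
Definition pauliX : 'M[CC]_(k + k) := block_mx 0 1%:M 1%:M 0.

Lemma adj_block_mx (X Y Z W : 'M[CC]_k) :
  (block_mx X Y Z W)^t* = block_mx (X^t*) (Z^t*) (Y^t*) (W^t*).
Proof. by rewrite tr_block_mx map_block_mx. Qed.

Lemma pauliZ_adj : pauliZ^t* = pauliZ.
Proof. by rewrite /pauliZ adj_block_mx linearN /= map_mxN trmx1 map_mx1 trmx0 map_mx0. Qed.

Lemma pauliX_adj : pauliX^t* = pauliX.
Proof. by rewrite /pauliX adj_block_mx trmx1 map_mx1 trmx0 map_mx0. Qed.

Lemma pauliZ_sqr : pauliZ *m pauliZ = 1%:M.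
Proof.
rewrite /pauliZ mulmx_block !(mulmx0, mul0mx, mulmx1, addr0, add0r) mulmxN mulNmx.
by rewrite opprK mulmx1 scalar_mx_block.
Qed.

Lemma pauliX_sqr : pauliX *m pauliX = 1%:M.
Proof.
by rewrite /pauliX mulmx_block !(mulmx0, mul0mx, mulmx1, addr0, add0r) scalar_mx_block.
Qed.

Lemma pauliXZ : pauliX *m pauliZ = - (pauliZ *m pauliX).
Proof.
rewrite /pauliX /pauliZ !mulmx_block !(mulmx0, mul0mx, mulmx1, mul1mx, addr0, add0r).
by rewrite opp_block_mx oppr0 opprK.
Qed.

End Pauli.

Definition anticomm_move l k (j : nat) : cmove l (k + k) :=
  match j with
  | 0 => inl 1%:M
  | 1 => inr 1%:M
  | 2 => inr (pauliZ k)
  | 3 => inr (pauliX k)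
  | 4 => inr (pauliZ k *m pauliX k)
  | _ => inr (pauliX k *m pauliZ k)
  end.

Lemma anticomm_move_legal l k j : (0 < l)%N -> (0 < k)%N ->
  match anticomm_move l k j with
  | inl a => opnorm a <= 1
  | inr b => opnorm b <= 1
  end.
Proof.
move=> l_gt0 k_gt0; have kk_gt0 : (0 < k + k)%N by rewrite addn_gt0 k_gt0.
have unitary_le1 q (X : 'M[CC]_q) : (0 < q)%N -> X^t* *m X = 1%:M -> opnorm X <= 1.
  by move=> q_gt0 /mxbound_unitary; apply: opnorm_le.
have adjM (Y W : 'M[CC]_(k + k)) : (Y *m W)^t* = W^t* *m Y^t*.
  by rewrite trmx_mul map_mxM.
case: j => [|[|[|[|[|j]]]]] /=; apply: unitary_le1;
  rewrite ?adjM ?pauliZ_adj ?pauliX_adj ?trmx1 ?map_mx1 ?mulmx1 //.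
- exact: pauliZ_sqr.
- exact: pauliX_sqr.
- by rewrite mulmxA -(mulmxA (pauliX k)) pauliZ_sqr mulmx1 pauliX_sqr.
- by rewrite mulmxA -(mulmxA (pauliZ k)) pauliX_sqr mulmx1 pauliZ_sqr.
Qed.

Lemma odd_no_approx_pauli l (A B C D F : 'M[CC]_l) eps :
  odd l -> 0 <= eps -> eps < 1 / 10 -> mxbound A 1 -> mxbound B 1 ->
  mxbound (F - 1%:M) eps -> mxbound (A^t* - A) eps ->
  mxbound (A *m A - F) eps -> mxbound (B *m B - F) eps ->
  mxbound (A *m B - C) eps -> mxbound (B *m A - D) eps ->
  mxbound (C + D) eps -> False.
Proof.
move=> odd_l eps_ge0 eps_small A1 B1 F_1 A_adj AA_F BB_F AB_C BA_D C_D.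
have eps_le1 : eps <= 1 by clear -eps_small; lra.
have := odd_anticomm_approx_bound odd_l (hermpart_adj A)
  (mulr_ge0 (ler0n _ 4) eps_ge0) B1
  (hermpart_sqr_approx eps_ge0 eps_le1 A1 A_adj F_1 AA_F)
  (sqr_approx eps_ge0 F_1 BB_F)
  (hermpart_anticomm_approx eps_ge0 B1 A_adj AB_C BA_D C_D).
by clear -eps_small; lra.
Qed.

Lemma challenger_wins_odd_even l k eps : odd l -> (0 < k)%N ->
  0 <= eps -> eps < 1 / 10 -> challenger_wins l (k + k) 6 eps.
Proof.
move=> odd_l k_gt0 eps_ge0 eps_small; have l_gt0 := odd_gt0 odd_l.
have kk_gt0 : (0 < k + k)%N by rewrite addn_gt0 k_gt0.
pose s : cstrat l (k + k) := fun h => anticomm_move l k (size h).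
have sL : cstrat_legal s by move=> h; apply: anticomm_move_legal.
exists s; split => // t tL win; set p := play s t 6 in win.
have challenger j (lt_j6 : (j < 6)%N) :=
  nth_play_sized (anticomm_move l k) t lt_j6.
have a0 : (nth (0, 0) p 0).1 = 1%:M := challenger 0 isT.
have b1 : (nth (0, 0) p 1).2 = 1%:M := challenger 1 isT.
have b2 : (nth (0, 0) p 2).2 = pauliZ k := challenger 2 isT.
have b3 : (nth (0, 0) p 3).2 = pauliX k := challenger 3 isT.
have b4 : (nth (0, 0) p 4).2 = pauliZ k *m pauliX k := challenger 4 isT.
have b5 : (nth (0, 0) p 5).2 = pauliX k *m pauliZ k := challenger 5 isT.
have legal j (lt_j6 : (j < 6)%N) := opnorm_mxbound (play_legal sL tL lt_j6).1.
have mul_rel i j k' := dup_wins_mul kk_gt0 win (i := i) (j := j) (k := k').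
have adj_rel i j := dup_wins_adj kk_gt0 win (i := i) (j := j).
apply: (@odd_no_approx_pauli l (nth (0, 0) p 2).1 (nth (0, 0) p 3).1
  (nth (0, 0) p 4).1 (nth (0, 0) p 5).1 (nth (0, 0) p 1).1 eps) => //.
- exact: legal 2 isT.
- exact: legal 3 isT.
- by move: (mul_rel 1 0 0 isT isT isT); rewrite a0 b1 mulmx1 mul1mx; apply.
- by apply: (adj_rel 2 2 isT isT); rewrite b2 pauliZ_adj.
- by apply: (mul_rel 2 2 1 isT isT isT); rewrite b1 b2 pauliZ_sqr.
- by apply: (mul_rel 3 3 1 isT isT isT); rewrite b1 b3 pauliX_sqr.
- by apply: (mul_rel 2 3 4 isT isT isT); rewrite b2 b3 b4.
- by apply: (mul_rel 3 2 5 isT isT isT); rewrite b2 b3 b5.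
- rewrite -[_ + _]opprK opprD; apply/mxboundN.
  by apply: (dup_wins_lin kk_gt0 win (i := 4) (k := 5) isT isT); rewrite b4 b5 pauliXZ.
Qed.

Theorem theorem4 :
  exists eps0 : RR, 0 < eps0 /\
    forall eps : RR, 0 < eps -> eps < eps0 ->
    forall l m : nat, (1 <= l)%N -> odd l -> (2 <= m)%N -> ~~ odd m ->
      challenger_wins l m 6 eps.
Proof.
exists (1 / 10); split => [|eps eps_gt0 eps_small l m _ odd_l m_ge2 even_m].
  by rewrite divr_gt0.
have m_half : m = (m./2 + m./2)%N.
  by rewrite addnn -[LHS]odd_double_half (negPf even_m).
rewrite m_half; apply: challenger_wins_odd_even => //; last exact: ltW.
by rewrite half_gt0.
Qed.
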